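(* Let $w\in F_2$ be a word in $x,y$ and $G=\mathrm{SL}(2,\mathbb{C})$. If the trace map $\psi_w$ of $w$ is Big, then the word map $w:G^2\to G$ is almost surjective, i.e. its image contains $G\setminus\{-\mathrm{id}\}$.
   Context: For a word $w(x,y)$ there are polynomials $P_w(s,t,u)$, $Q_w(s,t,u)$ with integer coefficients such that for all $x,y\in G$: $\mathrm{tr}(w(x,y))=P_w(\mathrm{tr}\,x,\mathrm{tr}\,y,\mathrm{tr}\,xy)$ and $\mathrm{tr}(w(x,y)y)=Q_w(\mathrm{tr}\,x,\mathrm{tr}\,y,\mathrm{tr}\,xy)$. The trace map is $\psi_w:\mathbb{C}^3\to\mathbb{C}^3$, $\psi_w(s,t,u)=(P_w(s,t,u),t,Q_w(s,t,u))$. For $a\in\mathbb{C}$ let $\psi_a:\mathbb{C}^2_{s,u}\to\mathbb{C}^2$, $\psi_a(s,u)=(P_w(s,a,u),Q_w(s,a,u))$; $\psi_a$ is Big if $\psi_a(\mathbb{C}^2)=\mathbb{C}^2\setminus T_a$ for a finite set $T_a$, and $\psi_w$ is Big if $\psi_a$ is Big for some $a\in\mathbb{C}$. *)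

From HB Require Import structures.
From mathcomp Require Import all_boot all_order all_algebra.
From mathcomp Require Import reals complex.
From mathcomp Require mpoly.
Set Implicit Arguments. Unset Strict Implicit. Unset Printing Implicit Defensive.
Import Order.TTheory GRing.Theory Num.Theory.
Local Open Scope ring_scope.

(* A letter of a word in F_2 = <x,y>: (is_y, is_inverse). *)
Definition letter := (bool * bool)%type.
(* A word w(x,y) in F_2 (not necessarily reduced; the word map only depends
   on the group element). *)
Definition word := seq letter.

Section Words.
Variable C : comUnitRingType.

Definition eval_letter (x y : 'M[C]_2) (l : letter) : 'M[C]_2 :=
  let g := if l.1 then y else x in if l.2 then invmx g else g.

Definition eval_word (w : word) (x y : 'M[C]_2) : 'M[C]_2 :=
  foldr (fun l acc => eval_letter x y l *m acc) 1%:M w.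

Definition ev3 (P : mpoly.mpoly 3 int) (s t u : C) : C :=
  mpoly.meval (fun i : 'I_3 => [:: s; t; u]`_i) (mpoly.map_mpoly (fun z : int => z%:~R) P).
End Words.

Section Big.
Variable R : realType.
Notation C := (R[i])%type.

Definition trace_polys (w : word) (P Q : mpoly.mpoly 3 int) : Prop :=
  forall x y : 'M[C]_2, \det x = 1 -> \det y = 1 ->
    \tr (eval_word w x y) = ev3 P (\tr x) (\tr y) (\tr (x *m y)) /\
    \tr (eval_word w x y *m y) = ev3 Q (\tr x) (\tr y) (\tr (x *m y)).

Definition psi_a_big (P Q : mpoly.mpoly 3 int) (a : C) : Prop :=
  exists T : seq (C * C), forall z : C * C,
    (exists s u : C, (ev3 P s a u, ev3 Q s a u) = z) <-> z \notin T.

Definition trace_map_big (w : word) : Prop :=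
  exists P Q : mpoly.mpoly 3 int, trace_polys w P Q /\ exists a : C, psi_a_big P Q a.
End Big.

(* Fix g in SL(2,C) with g <> -1.  Scalar g is then 1 = w(1,1).  Otherwise choose
   b in C with b <> a, b <> -a and (tr g, b) in the image of psi_a; this is possible
   because the complement of the image is finite.  The Fricke parametrisation
   gives x, y in SL(2,C) with tr w(x,y) = tr g and tr (w(x,y) y) = b, and b <> +-a
   forces w(x,y) <> +-1, so w(x,y) is non-scalar.  Two non-scalar matrices of
   SL(2,C) with the same trace are conjugate, and word maps commute with
   conjugation. *)
From HB Require Import structures.
From mathcomp Require Import all_boot all_order all_algebra.
From mathcomp Require Import reals complex.
From mathcomp Require mpoly.
From mathcomp Require Import ring.
Import Order.TTheory GRing.Theory Num.Theory.
Local Open Scope ring_scope.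
Set Implicit Arguments. Unset Strict Implicit.

Section Matrix2.
Variable R : comNzRingType.
Implicit Types A B : 'M[R]_2.

Definition mx2 (a b c d : R) : 'M[R]_2 :=
  \matrix_(i, j) if i == 0 then (if j == 0 then a else b) else (if j == 0 then c else d).

Lemma ord2P (i : 'I_2) : i = 0 \/ i = 1.
Proof. by case: i => [[|[|//]] ?]; [left | right]; apply: val_inj. Qed.

Lemma mx2_entries A : A = mx2 (A 0 0) (A 0 1) (A 1 0) (A 1 1).
Proof.
by apply/matrixP => i j; rewrite mxE; case: (ord2P i) => ->; case: (ord2P j) => ->.
Qed.

Lemma mx2E a b c d :
  (mx2 a b c d 0 0 = a) * (mx2 a b c d 0 1 = b) *
  (mx2 a b c d 1 0 = c) * (mx2 a b c d 1 1 = d).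
Proof. by rewrite !mxE. Qed.

Lemma lift0_ord2 : lift ord0 ord0 = 1 :> 'I_2.
Proof. exact: val_inj. Qed.

Lemma det_mx2 a b c d : \det (mx2 a b c d) = a * d - b * c.
Proof.
rewrite (expand_det_row _ 0) !big_ord_recl big_ord0 /cofactor !det_mx11 !mxE /=.
by rewrite /bump /= expr0 expr1 mul1r mulN1r addr0 mulrN.
Qed.

Lemma mxtrace_mx2 a b c d : \tr (mx2 a b c d) = a + d.
Proof. by rewrite /mxtrace !big_ord_recl big_ord0 addr0 lift0_ord2 !mx2E. Qed.

Lemma mulmx_mx2 a b c d a' b' c' d' :
  mx2 a b c d *m mx2 a' b' c' d'
  = mx2 (a * a' + b * c') (a * b' + b * d') (c * a' + d * c') (c * b' + d * d').
Proof.
apply/matrixP => i j; rewrite !mxE !big_ord_recl big_ord0 addr0 lift0_ord2 !mxE /=.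
by case: (ord2P i) => ->; case: (ord2P j) => ->.
Qed.

Lemma det2E A : \det A = A 0 0 * A 1 1 - A 0 1 * A 1 0.
Proof. by rewrite {1}[A]mx2_entries det_mx2. Qed.

Lemma mxtrace2E A : \tr A = A 0 0 + A 1 1.
Proof. by rewrite {1}[A]mx2_entries mxtrace_mx2. Qed.

Lemma is_scalar_mx2 A :
  is_scalar_mx A = [&& A 0 1 == 0, A 1 0 == 0 & A 0 0 == A 1 1].
Proof.
apply/is_scalar_mxP/and3P => [[c ->] | [/eqP A01 /eqP A10 /eqP A00]].
  by rewrite !mxE /= !eqxx.
by exists (A 0 0); rewrite [LHS]mx2_entries A01 A10 -A00; apply/matrixP => i j;
  rewrite !mxE; case: (ord2P i) => ->; case: (ord2P j) => ->.
Qed.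
End Matrix2.

Section Similarity2.
Variable F : fieldType.
Implicit Types A B : 'M[F]_2.

(* The matrix with columns v and A v. *)
Definition cyclic_basis A (v1 v2 : F) : 'M[F]_2 :=
  mx2 v1 (A 0 0 * v1 + A 0 1 * v2) v2 (A 1 0 * v1 + A 1 1 * v2).

Definition companion2 A : 'M[F]_2 := mx2 0 (- \det A) 1 (\tr A).

(* Cayley-Hamilton: A (A v) = tr A * A v - det A * v. *)
Lemma mulmx_cyclic_basis A v1 v2 :
  A *m cyclic_basis A v1 v2 = cyclic_basis A v1 v2 *m companion2 A.
Proof.
rewrite /companion2 det2E mxtrace2E {1}[A]mx2_entries /cyclic_basis !mulmx_mx2.
by congr mx2; ring.
Qed.

Lemma cyclic_basis_unit A :
  ~~ is_scalar_mx A -> exists v1 v2, cyclic_basis A v1 v2 \in unitmx.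
Proof.
rewrite is_scalar_mx2 => nsA.
have [A10 | A10] := eqVneq (A 1 0) 0; last first.
  by exists 1, 0; rewrite unitmxE unitfE det_mx2 !(mulr0, mulr1, addr0, mul1r, subr0).
have [A01 | A01] := eqVneq (A 0 1) 0; last first.
  exists 0, 1; rewrite unitmxE unitfE det_mx2 A10.
  by rewrite !(mulr0, mul0r, mulr1, add0r, sub0r) oppr_eq0.
exists 1, 1; rewrite unitmxE unitfE det_mx2 A10 A01; move: nsA; rewrite A10 A01 !eqxx /=.
by apply: contraNN => /eqP det0; rewrite eq_sym -subr_eq0 -det0; apply/eqP; ring.
Qed.

Lemma nonscalar_similar2 A B : \tr A = \tr B -> \det A = \det B ->
  ~~ is_scalar_mx A -> ~~ is_scalar_mx B ->
  exists2 h, h \in unitmx & h *m A *m invmx h = B.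
Proof.
move=> trAB detAB /cyclic_basis_unit[a1 [a2 uP]] /cyclic_basis_unit[b1 [b2 uQ]].
set P := cyclic_basis A a1 a2 in uP; set Q := cyclic_basis B b1 b2 in uQ.
have eA : A = P *m companion2 A *m invmx P by rewrite -mulmx_cyclic_basis mulmxK.
have eB : B = Q *m companion2 B *m invmx Q by rewrite -mulmx_cyclic_basis mulmxK.
have eK : companion2 A = companion2 B by rewrite /companion2 trAB detAB.
exists (Q *m invmx P); first by rewrite unitmx_mul uQ unitmx_inv.
have inv_h : invmx (Q *m invmx P) = P *m invmx Q.
  change ((Q * P^-1)^-1 = P * Q^-1 :> 'M[F]_2).
  by rewrite invrM ?invrK // unitrV.
by rewrite {1}eA eB eK inv_h !mulmxA !mulmxKV.
Qed.

Lemma scalar_det1_mx2 A : is_scalar_mx A -> \det A = 1 -> A = 1%:M \/ A = - 1%:M.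
Proof.
case/is_scalar_mxP => c ->; rewrite det_scalar => /eqP; rewrite sqrf_eq1.
by case/orP => /eqP ->; [left | right; rewrite raddfN].
Qed.

Lemma mxtrace_mul_scalar_det1 A B : is_scalar_mx A -> \det A = 1 ->
  \tr (A *m B) = \tr B \/ \tr (A *m B) = - \tr B.
Proof.
move=> sA /(scalar_det1_mx2 sA)[] ->; [left | right]; first by rewrite mul1mx.
by rewrite mulNmx mul1mx -scaleN1r mxtraceZ mulN1r.
Qed.
End Similarity2.

Section WordMaps.
Variable C : comUnitRingType.
Implicit Types h x y : 'M[C]_2.

Lemma det_conj h x : h \in unitmx -> \det (h *m x *m invmx h) = \det x.
Proof. by move=> uh; rewrite !det_mulmx mulrAC -det_mulmx mulmxV // det1 mul1r. Qed.

(* Also for singular x, where both sides are h x h^-1 since invmx is the identity there. *)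
Lemma invmx_conj h x :
  h \in unitmx -> invmx (h *m x *m invmx h) = h *m invmx x *m invmx h.
Proof.
move=> uh; have [ux | nux] := boolP (x \in unitmx).
  change ((h * x * h^-1)^-1 = h * x^-1 * h^-1).
  by rewrite !invrM ?invrK ?mulrA // ?unitrMr ?unitrV.
by rewrite [invmx x]invmx_out // [LHS]invmx_out // inE /= unitmxE det_conj.
Qed.

Lemma eval_word_conj (w : word) h x y : h \in unitmx ->
  eval_word w (h *m x *m invmx h) (h *m y *m invmx h) = h *m eval_word w x y *m invmx h.
Proof.
move=> uh; elim: w => [|[[] []] w IH] /=; first by rewrite mulmx1 mulmxV.
all: by rewrite IH /eval_letter /= ?invmx_conj // !mulmxA mulmxKV.
Qed.

Lemma det_eval_word (w : word) x y :
  \det x = 1 -> \det y = 1 -> \det (eval_word w x y) = 1.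
Proof.
move=> dx dy; elim: w => [|[[] []] w IH] /=; first by rewrite det1.
all: by rewrite det_mulmx IH mulr1 /eval_letter /= ?det_inv ?dx ?dy ?invr1.
Qed.

Lemma eval_word11 (w : word) : eval_word w (1%:M : 'M[C]_2) 1%:M = 1%:M.
Proof.
by elim: w => [|[[] []] w IH] //=; rewrite IH /eval_letter /= ?invmx1 mul1mx.
Qed.
End WordMaps.

Lemma fricke_surjective (F : closedFieldType) (s a u : F) :
  exists x y : 'M[F]_2,
    [/\ \det x = 1, \det y = 1, \tr x = s, \tr y = a & \tr (x *m y) = u].
Proof.
have [p p_root] := @solve_monicpoly F 2 (nth 0 [:: u - 2; a - s]) isT.
rewrite !big_ord_recl big_ord0 /bump /= addr0 expr0 expr1 mulr1 in p_root.
have -> : u = p ^+ 2 + (s - a) * p + 2 by rewrite p_root; ring.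
exists (mx2 s 1 (-1) 0), (mx2 p (-1) (1 - p * (a - p)) (a - p)).
by rewrite mulmx_mx2 !det_mx2 !mxtrace_mx2; split; ring.
Qed.

Lemma exists_notin (R : numDomainType) (s : seq R) : exists b, b \notin s.
Proof.
have le_sum z : z \in s -> `|z| <= \sum_(t <- s) `|t|.
  elim: s => [|t s IH] //; rewrite in_cons big_cons => /orP[/eqP -> | /IH].
    by rewrite lerDl sumr_ge0.
  by move/le_trans; apply; rewrite lerDr.
exists (1 + \sum_(t <- s) `|t|); apply/negP => /le_sum.
by rewrite ger0_norm ?addr_ge0 ?sumr_ge0 // gerDr ler10.
Qed.

Theorem proposition8p2 (R : realType) (w : word) :
  trace_map_big R w ->
  forall g : 'M[R[i]]_2, \det g = 1 -> g <> - 1%:M ->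
    exists x y : 'M[R[i]]_2, \det x = 1 /\ \det y = 1 /\ eval_word w x y = g.
Proof.
move=> [P [Q [trPQ [a [T bigT]]]]] g det_g g_neqN1.
have [g_sc | g_nsc] := boolP (is_scalar_mx g).
  have [g1 | //] := scalar_det1_mx2 g_sc det_g.
  by exists 1%:M, 1%:M; rewrite det1 eval_word11 g1.
have [b] := exists_notin ([seq z.2 | z <- T] ++ [:: a; - a]).
rewrite mem_cat !inE negb_or => /andP[b_notin_T /norP[/eqP b_neq_a /eqP b_neq_Na]].
have [s [u psi_su]] : exists s u, (ev3 P s a u, ev3 Q s a u) = (\tr g, b).
  by apply/bigT; apply: contra b_notin_T => /(map_f snd).
have [x [y [det_x det_y tr_x tr_y tr_xy]]] := fricke_surjective s a u.
have [trW trWy] := trPQ x y det_x det_y.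
rewrite tr_x tr_y tr_xy in trW trWy.
case: psi_su; rewrite -trW -trWy => trW_g trWy_b.
have det_W := det_eval_word w det_x det_y.
have W_nsc : ~~ is_scalar_mx (eval_word w x y).
  apply/negP => W_sc; have := mxtrace_mul_scalar_det1 y W_sc det_W.
  by rewrite trWy_b tr_y => -[/b_neq_a | /b_neq_Na].
have [h h_unit hWh] := nonscalar_similar2 trW_g (etrans det_W (esym det_g)) W_nsc g_nsc.
exists (h *m x *m invmx h), (h *m y *m invmx h).
by rewrite !det_conj // det_x det_y eval_word_conj.
Qed.
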